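(* For every integer $n\ge0$, the formal power series $\left(\frac{x^2}{1-x}\right)^n\in\mathbb{C}[[x]]$ is symplectic.
   Context: A formal power series $\varphi(x)=\sum_{i\ge0}\gamma_i x^i\in\mathbb{C}[[x]]$ is called symplectic if for every $m\ge1$ one has $\sum_{k=0}^{m-1}(-1)^k\binom{m-1}{k}\gamma_{m+k}=0$. *)

From HB Require Import structures.
From mathcomp Require Import all_boot all_order all_algebra.
From mathcomp Require Import reals.
From mathcomp Require Import complex.
Set Implicit Arguments. Unset Strict Implicit. Unset Printing Implicit Defensive.
Import Order.TTheory GRing.Theory Num.Theory.
Local Open Scope ring_scope.

(* Formal power series over a commutative ring K, represented by their
   coefficient sequences: phi = \sum_i phi i x^i. *)
Definition fps (K : Type) := nat -> K.

Section FPS.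
Variable K : comRingType.

Definition fps_const (c : K) : fps K := fun i => if i == 0%N then c else 0.
Definition fps_X : fps K := fun i => if i == 1%N then 1 else 0.
Definition fps_add (f g : fps K) : fps K := fun i => f i + g i.
Definition fps_sub (f g : fps K) : fps K := fun i => f i - g i.
Definition fps_mul (f g : fps K) : fps K :=
  fun m => \sum_(i < m.+1) f i * g (m - i)%N.
Fixpoint fps_pow (f : fps K) (n : nat) : fps K :=
  match n with
  | 0%N => fps_const 1
  | n'.+1 => fps_mul (fps_pow f n') f
  end.

Definition symplectic (phi : fps K) : Prop :=
  forall m : nat, (1 <= m)%N ->
    \sum_(k < m) (-1) ^+ k * ('C(m.-1, k))%:R * phi (m + k)%N = 0.

End FPS.

From HB Require Import structures.
From mathcomp Require Import all_boot all_order all_algebra.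
From mathcomp Require Import reals.
From mathcomp Require Import complex.
From mathcomp Require Import zify.
From Stdlib Require Import FunctionalExtensionality.
Set Implicit Arguments. Unset Strict Implicit. Unset Printing Implicit Defensive.
Import Order.TTheory GRing.Theory Num.Theory.
Local Open Scope ring_scope.

(* The coefficients of x^2/(1-x) are [i >= 2].  The alternating binomial sum
   S_a f j := \sum_(k <= a) (-1)^k C(a,k) f(j+k) is the a-th iterate of the
   difference operator (D f) i := f i - f (i+1), evaluated at j, and
   symplecticity of f says S_a f (a+1) = 0 for all a.  Multiplying by
   x^2/(1-x) takes partial sums shifted by one, so D ((x^2/(1-x))^(n+1))
   is - (x^2/(1-x))^n shifted by one; hence S_(a+1) of the (n+1)-st power at
   a+2 equals - S_a of the n-th power at a+1, and induction on a concludes,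
   starting from the vanishing coefficient of x^1. *)

Section AlternatingBinomialSums.
Variable K : comNzRingType.
Implicit Types (f g : fps K) (a j : nat).

Definition alt_binom_sum f a j : K :=
  \sum_(k < a.+1) (-1) ^+ k * ('C(a, k))%:R * f (j + k)%N.

Definition fps_diff f : fps K := fun i => f i - f i.+1.

Lemma alt_binom_sumS f a j :
  alt_binom_sum f a.+1 j = alt_binom_sum f a j - alt_binom_sum f a j.+1.
Proof.
rewrite /alt_binom_sum big_ord_recl /= addn0 expr0 bin0 mul1r.
under eq_bigr => i _ do
  rewrite /bump /= add1n binS natrD exprS mulrDr mulrDl addnS -addSn.
rewrite big_split /= addrA.
have -> : \sum_(i < a.+1) (-1) * (-1) ^+ i * ('C(a, i))%:R * f (j.+1 + i)%N
        = - \sum_(i < a.+1) (-1) ^+ i * ('C(a, i))%:R * f (j.+1 + i)%N.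
  by rewrite -sumrN; apply: eq_bigr => i _; rewrite mulN1r !mulNr.
congr (_ - _).
rewrite mul1r [in LHS]big_ord_recr /= bin_small // mulr0n mulr0 mul0r addr0.
rewrite [in RHS]big_ord_recl /= addn0 expr0 bin0 !mul1r; congr (_ + _).
by apply: eq_bigr => i _; rewrite /bump /= add1n addnS exprS -addSn.
Qed.

Lemma alt_binom_sum_diff f a j :
  alt_binom_sum f a.+1 j = alt_binom_sum (fps_diff f) a j.
Proof.
rewrite alt_binom_sumS /alt_binom_sum -sumrB.
by apply: eq_bigr => i _; rewrite addSn mulrBr.
Qed.

Lemma eq_alt_binom_sum f g a j :
  (forall k, (k <= a)%N -> f (j + k)%N = g (j + k)%N) ->
  alt_binom_sum f a j = alt_binom_sum g a j.
Proof. by move=> eq_fg; apply: eq_bigr => i _; rewrite eq_fg // -ltnS. Qed.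

Lemma alt_binom_sumN f a j :
  alt_binom_sum (fun i => - f i) a j = - alt_binom_sum f a j.
Proof. by rewrite /alt_binom_sum -sumrN; apply: eq_bigr => i _; rewrite mulrN. Qed.

Lemma symplecticE f :
  symplectic f <-> forall a, alt_binom_sum f a a.+1 = 0.
Proof.
by split=> [symf a | sum0 [//|a] _]; [exact: symf | exact: sum0].
Qed.

End AlternatingBinomialSums.

Section Series.
Variable K : comNzRingType.
Implicit Types (f : fps K).

Lemma fps_mulX f m :
  fps_mul f (fps_X K) m = if m is m'.+1 then f m' else 0.
Proof.
have X0 : fps_X K 0 = 0 by [].
rewrite /fps_mul big_ord_recr /= subnn X0 mulr0 addr0; case: m => [|m].
  by rewrite big_ord0.
rewrite big_ord_recr /= subSnn mulr1 big1 ?add0r // => i _.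
rewrite /fps_X ifF ?mulr0 //; apply/eqP; have := ltn_ord i; lia.
Qed.

Lemma fps_powX2 m : fps_pow (fps_X K) 2 m = (m == 2)%N%:R.
Proof. by rewrite /= fps_mulX; case: m => [|[|[|m]]] //=; rewrite fps_mulX. Qed.

Lemma fps_mul_1subX f m :
  fps_mul (fps_sub (fps_const 1) (fps_X K)) f m =
  if m is m'.+1 then f m - f m' else f 0.
Proof.
rewrite /fps_mul /fps_sub /fps_const /fps_X big_ord_recl /= subr0 mul1r subn0.
case: m => [|m]; first by rewrite big_ord0 addr0.
rewrite big_ord_recl /= sub0r mulN1r subSS subn0 big1 ?addr0 // => i _.
by rewrite /bump /= subrr mul0r.
Qed.

Definition fps_X2_div_1subX : fps K := fun i => (2 <= i)%N%:R.

Lemma fps_X2_div_1subX_unique f :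
  fps_mul (fps_sub (fps_const 1) (fps_X K)) f = fps_pow (fps_X K) 2 ->
  f = fps_X2_div_1subX.
Proof.
move=> eq_f; apply: functional_extensionality => m.
have eq_fm i := f_equal (fun g => g i) eq_f.
elim: m => [|m IHm]; first by move: (eq_fm 0%N); rewrite fps_mul_1subX fps_powX2.
move: (eq_fm m.+1); rewrite fps_mul_1subX fps_powX2 IHm => /eqP.
rewrite subr_eq => /eqP ->.
by case: m {IHm eq_fm} => [|[|m]]; rewrite /fps_X2_div_1subX /= ?add0r ?addr0.
Qed.

Lemma fps_mul_X2_div_1subX f i :
  fps_mul f fps_X2_div_1subX i.+1 = \sum_(k < i) f k.
Proof.
have [X0 X1] : fps_X2_div_1subX 0 = 0 /\ fps_X2_div_1subX 1 = 0 by [].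
rewrite /fps_mul big_ord_recr /= subnn X0 mulr0 addr0; case: i => [|i].
  by rewrite big_ord_recr !big_ord0 /= X1 mulr0 addr0.
rewrite big_ord_recr /= subSnn X1 mulr0 addr0; apply: eq_bigr => k _.
have lt_k := ltn_ord k.
by rewrite /fps_X2_div_1subX (_ : 2 <= i.+2 - k)%N ?mulr1 //; lia.
Qed.

Lemma fps_diff_pow_X2_div_1subX n i :
  fps_diff (fps_pow fps_X2_div_1subX n.+1) i.+1
  = - fps_pow fps_X2_div_1subX n i.
Proof.
rewrite /fps_diff /= !fps_mul_X2_div_1subX big_ord_recr /=.
by rewrite opprD addrA subrr add0r.
Qed.

Lemma fps_pow_X2_div_1subX_1 n : fps_pow fps_X2_div_1subX n 1 = 0.
Proof. by case: n => [|n] //=; rewrite fps_mul_X2_div_1subX big_ord0. Qed.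

Lemma alt_binom_sum_pow_X2_div_1subX a n :
  alt_binom_sum (fps_pow fps_X2_div_1subX n) a a.+1 = 0.
Proof.
elim: a n => [|a IHa] n.
  by rewrite /alt_binom_sum big_ord_recl big_ord0 fps_pow_X2_div_1subX_1 !mulr0 addr0.
rewrite alt_binom_sum_diff; case: n => [|n].
  by rewrite /alt_binom_sum big1 // => i _; rewrite /fps_diff /= /fps_const subrr mulr0.
rewrite (@eq_alt_binom_sum _ _ (fun i => - fps_pow fps_X2_div_1subX n i.-1));
  last by move=> k _; rewrite addSn fps_diff_pow_X2_div_1subX.
by rewrite alt_binom_sumN -[RHS]oppr0 -(IHa n).
Qed.

End Series.

Theorem lemma2p1 (R : realType) (phi : fps R[i])
  (hphi : fps_mul (fps_sub (fps_const 1) (fps_X R[i])) phi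
          = fps_pow (fps_X R[i]) 2) :
  forall n : nat, symplectic (fps_pow phi n).
Proof.
move=> n; rewrite (fps_X2_div_1subX_unique hphi) symplecticE => a.
exact: alt_binom_sum_pow_X2_div_1subX.
Qed.
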